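(* Let $n\ge1$, let $\theta_1,\dots,\theta_n,\theta\in\mathbb R$, $\boldsymbol\theta=(\theta_1,\dots,\theta_n)$, and define $|W_n(\boldsymbol\theta)\rangle=\frac1{\sqrt n}\sum_{j=1}^ne^{i\theta_j}X_j|0\rangle^{\otimes n}$, $|W_n(\theta)\rangle=|W_n((\theta,2\theta,\dots,n\theta))\rangle$, and $|W_n\rangle=|W_n(0)\rangle$. Then $$\|\Xi_{W_n(\boldsymbol\theta)}\|_4^4=\frac{d}{n^4}\Bigl[6n(n-1)+\Bigl|\sum_{j=1}^ne^{4i\theta_j}\Bigr|^2\Bigr],\qquad M_2(W_n(\boldsymbol\theta))=\log_2\frac{n^4}{6n(n-1)+\bigl|\sum_{j=1}^ne^{4i\theta_j}\bigr|^2};$$ in particular $\|\Xi_{W_n}\|_4^4=\frac{d(7n-6)}{n^3}$, $M_2(W_n)=\log_2\frac{n^3}{7n-6}$, and $$\|\Xi_{W_n(\theta)}\|_4^4=\frac{d[6n^2-6n+\sin^2(2n\theta)/\sin^2(2\theta)]}{n^4},\qquad M_2(W_n(\theta))=\log_2\frac{n^4}{6n^2-6n+\sin^2(2n\theta)/\sin^2(2\theta)}$$ (with $\sin^2(2n\theta)/\sin^2(2\theta)$ interpreted as $n^2$ when $\sin(2\theta)=0$).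
   Context: $d=2^n$; $X_j$ denotes the Pauli $X$ acting on the $j$th qubit. $\overline{\mathcal P}_n=\{I,X,Y,Z\}^{\otimes n}$; for a pure state $|\psi\rangle$, $\Xi_\psi(P)=\langle\psi|P|\psi\rangle$ for $P\in\overline{\mathcal P}_n$, $\|\Xi_\psi\|_4^4=\sum_P\Xi_\psi(P)^4$, and the stabilizer 2-Rényi entropy is $M_2(\psi)=-\log_2(\|\Xi_\psi\|_4^4/d)$. *)

From HB Require Import structures.
From mathcomp Require Import all_boot all_order all_algebra.
From mathcomp Require Import all_classical all_reals all_analysis.
From mathcomp Require Import complex.
Set Implicit Arguments. Unset Strict Implicit. Unset Printing Implicit Defensive.
Import Order.TTheory GRing.Theory Num.Theory.
Local Open Scope ring_scope.
Local Open Scope complex_scope.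

Section Defs.
Variable R : realType.
Variable n : nat.

(* computational basis of n qubits: bit strings b : 'I_n -> bool
   (false = |0>, true = |1>);  d = 2^n basis states *)
Definition basis := {ffun 'I_n -> bool}.
(* labels of single-qubit Paulis: 0 = I, 1 = X, 2 = Y, 3 = Z *)
Definition pauli := {ffun 'I_n -> 'I_4}.

Definition expi (t : R) : R[i] := Complex (cos t) (sin t).

(* single-qubit Pauli matrices, entry (row a, column b) *)
Definition sigma (k : 'I_4) (a b : bool) : R[i] :=
  match val k with
  | 0%N => if a == b then 1 else 0
  | 1%N => if a != b then 1 else 0
  | 2%N => if a == b then 0
           else if a then Complex 0 1 else Complex 0 (-1)
  | _ => if a == b then (if a then -1 else 1) else 0
  end.

Definition Pmat (P : pauli) (b c : basis) : R[i] :=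
  \prod_(k < n) sigma (P k) (b k) (c k).

Definition Papply (P : pauli) (v : basis -> R[i]) (b : basis) : R[i] :=
  \sum_(c : basis) Pmat P b c * v c.

Definition ket0 (c : basis) : R[i] := if c == [ffun=> false] then 1 else 0.

Definition Xat (j : 'I_n) : pauli :=
  [ffun k => if k == j then (@Ordinal 4 1 isT) else (@Ordinal 4 0 isT)].

Definition Wstate (th : 'I_n -> R) (b : basis) : R[i] :=
  ((Num.sqrt (n%:R : R))^-1)%:C *
  \sum_(j < n) expi (th j) * Papply (Xat j) ket0 b.

(* Xi_psi(P) = <psi|P|psi>  (real for Hermitian P; we take the real part) *)
Definition Xi (psi : basis -> R[i]) (P : pauli) : R :=
  complex.Re (\sum_(b : basis) (psi b)^* * Papply P psi b).

Definition norm44 (psi : basis -> R[i]) : R :=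
  \sum_(P : pauli) (Xi psi P) ^+ 4.

Definition log2 (x : R) : R := ln x / ln 2.

Definition M2 (psi : basis -> R[i]) : R :=
  - log2 (norm44 psi / (2 ^+ n)).

Definition sinratio (t : R) : R :=
  if sin (2 * t) == 0 then (n%:R) ^+ 2
  else sin (2 * n%:R * t) ^+ 2 / sin (2 * t) ^+ 2.

End Defs.

(* The amplitudes of W_n(theta) sit on the n weight-one basis states e_j, so
   <W|P|W> = (1/n) sum_{j,l} conj(e^{i theta_j}) e^{i theta_l} <e_j|P|e_l>.  A nonzero
   entry <e_j|P|e_l> forces P to flip exactly the qubits j and l, hence for a fixed
   Pauli string at most one of the diagonal part sum_j <e_j|P|e_j> and the pair terms
   {j,l} is nonzero, and the fourth power of the sum is the sum of fourth powers.
   Summing over P then factorises qubit by qubit: the diagonal part gives 2^n n(3n-2)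
   (quadruples of indices in which every index occurs an even number of times), and
   the pair {j,l} gives 2^n (6 + x^4 + x^-4) with x = e^{i(theta_l - theta_j)}; these
   add up to 2^n [6n(n-1) + |sum_j e^{4 i theta_j}|^2].  For theta_j = j theta the last
   sum is a geometric series in e^{4 i theta}. *)

From Pilot Require Import Defs.
From HB Require Import structures.
From mathcomp Require Import all_boot all_order all_algebra.
From mathcomp Require Import all_classical all_reals all_analysis.
From mathcomp Require Import complex.
From mathcomp Require Import ring lra zify.
Set Implicit Arguments.
Unset Strict Implicit.
Unset Printing Implicit Defensive.
Import Order.TTheory GRing.Theory Num.Theory.
Local Open Scope complex_scope.
Local Open Scope ring_scope.

Section OrthogonalSums.
Variable T : comPzSemiRingType.

Lemma exprD_ortho (a b : T) m : a * b = 0 -> (a + b) ^+ m.+1 = a ^+ m.+1 + b ^+ m.+1.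
Proof.
move=> ab0; elim: m => [|m IHm]; first by rewrite !expr1.
rewrite exprSr IHm mulrDl !mulrDr -!exprSr [b ^+ _ * a]mulrC.
have -> : a ^+ m.+1 * b = 0 by rewrite exprSr -mulrA ab0 mulr0.
have -> : a * b ^+ m.+1 = 0 by rewrite exprS mulrA ab0 mul0r.
by rewrite addr0 add0r.
Qed.

Lemma expr_sum_ortho (I : finType) (Q : pred I) (x : I -> T) m :
  {in Q &, forall i k, i != k -> x i * x k = 0} ->
  (\sum_(i | Q i) x i) ^+ m.+1 = \sum_(i | Q i) x i ^+ m.+1.
Proof.
move=> ortho; elim: m => [|m IHm].
  by rewrite expr1; apply: eq_bigr => i _; rewrite expr1.
rewrite exprSr IHm big_distrl /=; apply: eq_bigr => i Qi.
rewrite big_distrr (bigD1 i) //= -exprSr big1 ?addr0 // => k /andP[Qk ki].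
by rewrite exprSr -mulrA ortho ?mulr0 // eq_sym.
Qed.

Lemma expr4_sum (I : finType) (f : I -> T) :
  (\sum_i f i) ^+ 4 = \sum_a \sum_b \sum_c \sum_d f a * f b * f c * f d.
Proof.
have sqr_sum : (\sum_i f i) ^+ 2 = \sum_a \sum_b f a * f b.
  by rewrite expr2 big_distrl; apply: eq_bigr => a _; rewrite big_distrr.
rewrite (_ : 4 = 2 * 2)%N // exprM sqr_sum expr2 big_distrl; apply: eq_bigr => a _.
rewrite big_distrl; apply: eq_bigr => b _; rewrite big_distrr; apply: eq_bigr => c _.
by rewrite big_distrr; apply: eq_bigr => d _; rewrite /= !mulrA.
Qed.

End OrthogonalSums.

Lemma sum_diag_upper (V : nmodType) n (f : 'I_n -> 'I_n -> V) :
  \sum_j \sum_l f j l =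
  \sum_j f j j + \sum_(p : 'I_n * 'I_n | (p.1 < p.2)%N) (f p.1 p.2 + f p.2 p.1).
Proof.
have split_row j : \sum_l f j l =
    f j j + \sum_(l : 'I_n | (j < l)%N) f j l + \sum_(l : 'I_n | (l < j)%N) f j l.
  rewrite (bigD1 j) //= -addrA (bigID (fun l : 'I_n => (j < l)%N)) /=.
  by congr (_ + (_ + _)); apply: eq_bigl => l; rewrite -val_eqE /=; case: ltngtP.
under eq_bigr do rewrite split_row.
rewrite !big_split /= -addrA; congr (_ + (_ + _)); first by rewrite pair_big_dep.
by rewrite (exchange_big_dep xpredT) //= pair_big_dep.
Qed.

Section SingleQubit.
Variable R : realType.

Definition pauli_flips (p : 'I_4) : bool := (val p == 1%N) || (val p == 2%N).

Lemma sigma_eq0 p a b : pauli_flips p != (a != b) -> sigma R p a b = 0.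
Proof. by case: p => [[|[|[|[|m]]]] ?] //=; case: a; case: b. Qed.

Lemma sigma_conj p a b : (sigma R p a b)^* = sigma R p b a.
Proof.
case: p => [[|[|[|[|m]]]] ?] //=; case: a; case: b; rewrite /sigma /= ?conjc0 ?conjc1 //.
all: by apply/eqP; rewrite eq_complex /= ?oppr0 ?opprK ?eqxx.
Qed.

Ltac eval_sigma_sum :=
  rewrite !big_ord_recl big_ord0 /sigma /=;
  apply/eqP; rewrite eq_complex /=; apply/andP; split; apply/eqP; ring.

Lemma sum_sigma_diag4 (x1 x2 x3 x4 : bool) :
  \sum_(p < 4) sigma R p x1 x1 * sigma R p x2 x2 * sigma R p x3 x3 * sigma R p x4 x4
  = 2 * (~~ (x1 (+) x2 (+) x3 (+) x4))%:R.
Proof. by case: x1; case: x2; case: x3; case: x4; eval_sigma_sum. Qed.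

(* Off the diagonal only X and Y contribute, with X giving 1 and Y giving (-1)^a. *)
Lemma sum_sigma_pow4 (a : nat) (x y : bool) : (a < 5)%N -> ~~ (x && y) ->
  \sum_(p < 4) sigma R p x y ^+ (4 - a) * sigma R p y x ^+ a
  = 2 * (~~ odd a || (x == y))%:R.
Proof.
by case: a => [|[|[|[|[|a]]]]] // _; case: x; case: y => // _; eval_sigma_sum.
Qed.

End SingleQubit.

Section ComplexExponential.
Variable R : realType.

Lemma expi0 : expi (0 : R) = 1.
Proof. by rewrite /expi cos0 sin0. Qed.

Lemma expiD (a b : R) : expi (a + b) = expi a * expi b.
Proof.
rewrite /expi cosD sinD; apply/eqP; rewrite eq_complex /=.
by apply/andP; split; apply/eqP; ring.
Qed.

Lemma expiMn (k : nat) (t : R) : expi (k%:R * t) = expi t ^+ k.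
Proof.
elim: k => [|k IHk]; first by rewrite mul0r expr0 expi0.
by rewrite exprSr -IHk -expiD -natr1 mulrDl mul1r.
Qed.

Lemma conj_expiM (t : R) : (expi t)^* * expi t = 1.
Proof.
apply/eqP; rewrite eq_complex /= mulNr opprK -!expr2 cos2Dsin2 eqxx /=.
by rewrite mulNr mulrC subrr.
Qed.

Lemma normc_expi (t : R) : Normc.normc (expi t) = 1.
Proof. by rewrite /= cos2Dsin2 sqrtr1. Qed.

Lemma normc_sqr (z : R[i]) : (Normc.normc z ^+ 2)%:C = z^* * z.
Proof. by rewrite rmorphXn; exact: normCKC. Qed.

End ComplexExponential.

Section WeightOneStates.
Variable R : realType.
Variable n : nat.
Local Notation C := R[i].

Definition onehot (j : 'I_n) : Defs.basis n := [ffun k => k == j].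

Definition onehot_comb (a : 'I_n -> C) (b : Defs.basis n) : C :=
  \sum_j a j * (b == onehot j)%:R.

Definition Pentry (P : pauli n) (j l : 'I_n) : C := Pmat R P (onehot j) (onehot l).

Lemma Pentry_conj P j l : (Pentry P j l)^* = Pentry P l j.
Proof. by rewrite /Pentry /Pmat rmorph_prod; apply: eq_bigr => k _; exact: sigma_conj. Qed.

Lemma Pentry_flips P j l : Pentry P j l != 0 ->
  forall k, pauli_flips (P k) = ((k == j) != (k == l)).
Proof.
move=> Pjl k; apply/eqP; apply: contraNT Pjl => flips_k.
by rewrite /Pentry /Pmat (bigD1 k) //= sigma_eq0 ?mul0r // !ffunE.
Qed.

Lemma Papply_Xat_ket0 j b : Papply (Xat j) (@ket0 R n) b = (b == onehot j)%:R.
Proof.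
rewrite /Papply (bigD1 [ffun=> false]) //= big1 => [|c /negPf c_neq0]; last first.
  by rewrite /ket0 c_neq0 mulr0.
rewrite /ket0 eqxx mulr1 addr0 /Pmat.
have [->|b_neq] := eqVneq b (onehot j).
  by apply: big1 => k _; rewrite !ffunE; case: eqVneq.
have [k bk] : exists k, b k != onehot j k.
  apply/existsP; apply: contraNT b_neq => /existsPn bk.
  by apply/eqP/ffunP => k; apply/eqP; rewrite -[_ == _]negbK bk.
rewrite (bigD1 k) //= sigma_eq0 ?mul0r //.
by move: bk; rewrite !ffunE; case: (k == j); case: (b k).
Qed.

Lemma expval_onehot_comb (a : 'I_n -> C) P :
  \sum_b (onehot_comb a b)^*%C * Papply P (onehot_comb a) b
  = \sum_j \sum_l (a j)^* * a l * Pentry P j l.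
Proof.
have pick (F : Defs.basis n -> C) j : \sum_b (b == onehot j)%:R * F b = F (onehot j).
  rewrite (bigD1 (onehot j)) //= eqxx mul1r big1 ?addr0 // => b /negPf ->.
  by rewrite mul0r.
have Papply_comb b : Papply P (onehot_comb a) b = \sum_l a l * Pmat R P b (onehot l).
  rewrite /Papply /onehot_comb; under eq_bigr do rewrite mulr_sumr.
  rewrite exchange_big /=; apply: eq_bigr => l _.
  by rewrite -(pick (fun c => a l * Pmat R P b c)); apply: eq_bigr => c _; ring.
under eq_bigr do rewrite Papply_comb /onehot_comb rmorph_sum mulr_suml.
rewrite exchange_big /=; apply: eq_bigr => j _.
rewrite (eq_bigr (fun b => (b == onehot j)%:R *
  ((a j)^* * \sum_l a l * Pmat R P b (onehot l)))) => [|b _]; last first.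
  by rewrite rmorphM rmorph_nat /=; ring.
by rewrite pick mulr_sumr; apply: eq_bigr => l _; rewrite mulrA.
Qed.

Definition phase (th : 'I_n -> R) (j l : 'I_n) : C := (expi (th j))^* * expi (th l).

Definition wform (th : 'I_n -> R) (P : pauli n) : C :=
  \sum_j \sum_l phase th j l * Pentry P j l.

Lemma Xi_Wstate th P : Xi (Wstate th) P = n%:R^-1 * complex.Re (wform th P).
Proof.
set c := (Num.sqrt (n%:R : R))^-1.
have -> : Wstate th = onehot_comb (fun j => c%:C * expi (th j)).
  apply: funext => b; rewrite /Wstate /onehot_comb mulr_sumr.
  by apply: eq_bigr => j _; rewrite Papply_Xat_ket0 mulrA.
rewrite /Xi expval_onehot_comb.
have -> : \sum_j \sum_l (c%:C * expi (th j))^* * (c%:C * expi (th l)) * Pentry P j l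
    = (c * c)%:C * wform th P.
  have c_real : Num.conj (c%:C : C) = c%:C := conjc_real c.
  rewrite /wform mulr_sumr; apply: eq_bigr => j _; rewrite mulr_sumr.
  by apply: eq_bigr => l _; rewrite !rmorphM /= c_real /phase; ring.
have -> : c * c = n%:R^-1 by rewrite -invfM -expr2 sqr_sqrtr // ler0n.
by case: (wform th P) => x y /=; rewrite mul0r subr0.
Qed.

Lemma wform_real th P : (complex.Re (wform th P))%:C = wform th P.
Proof.
apply: RRe_real; rewrite CrealE; apply/eqP.
rewrite /wform rmorph_sum exchange_big /=; apply: eq_bigr => l _.
rewrite rmorph_sum; apply: eq_bigr => j _.
by rewrite rmorphM /= Pentry_conj /phase rmorphM /= conjCK; ring.
Qed.

End WeightOneStates.

Section WformDecomposition.
Variable R : realType.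
Variable n : nat.
Implicit Types (th : 'I_n -> R) (P : pauli n).

Definition wdiag P : R[i] := \sum_j Pentry R P j j.

Definition woff th P (j l : 'I_n) : R[i] :=
  phase th j l * Pentry R P j l + phase th l j * Pentry R P l j.

Lemma phase_diag th j : phase th j j = 1.
Proof. exact: conj_expiM. Qed.

Lemma wform_split th P :
  wform th P = wdiag P + \sum_(p : 'I_n * 'I_n | (p.1 < p.2)%N) woff th P p.1 p.2.
Proof.
rewrite /wform sum_diag_upper; congr (_ + _).
by apply: eq_bigr => j _; rewrite phase_diag mul1r.
Qed.

Lemma wdiag_flips P : wdiag P != 0 -> forall k, ~~ pauli_flips (P k).
Proof.
move=> diag_neq0 k; have [j _ Pjj] : exists2 j, true & Pentry R P j j != 0.
  apply/exists_inP; apply: contraNT diag_neq0 => /exists_inPn Pjj.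
  by rewrite /wdiag big1 // => j _; apply/eqP; rewrite -[_ == _]negbK Pjj.
by rewrite (Pentry_flips Pjj) eqxx.
Qed.

Lemma woff_flips th P j l : woff th P j l != 0 ->
  forall k, pauli_flips (P k) = ((k == j) != (k == l)).
Proof.
move=> off_neq0 k; have [Pjl|Pjl] := eqVneq (Pentry R P j l) 0; last exact: Pentry_flips Pjl k.
have [Plj|Plj] := eqVneq (Pentry R P l j) 0.
  by move: off_neq0; rewrite /woff Pjl Plj !mulr0 addr0 eqxx.
by rewrite (Pentry_flips Plj); case: (k == j); case: (k == l).
Qed.

Lemma wdiag_woff_ortho th P j l : j != l -> wdiag P * woff th P j l = 0.
Proof.
move=> jl; apply/eqP; rewrite mulf_eq0; apply: contraTT jl => /norP[diag_neq0 off_neq0].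
by move: (wdiag_flips diag_neq0 j); rewrite (woff_flips off_neq0) eqxx; case: (j == l).
Qed.

Lemma upper_pair_eq (j l j' l' : 'I_n) : (j < l)%N -> (j' < l')%N ->
  (forall k : 'I_n, ((k == j) != (k == l)) = ((k == j') != (k == l'))) ->
  (j, l) = (j', l').
Proof.
move=> jl jl' same.
have jl_neq : (j == l) = false by rewrite -val_eqE /= ltn_eqF.
have in_pair (k : 'I_n) : ((k == j) != (k == l)) = (k \in [:: j; l]).
  by rewrite !inE; have [->|_] := eqVneq k j; rewrite ?jl_neq //; case: (k == l).
have : (j' \in [:: j; l]) && (l' \in [:: j; l]).
  rewrite -!in_pair !same !eqxx; have [e|_] := eqVneq j' l' => //.
  by rewrite e ltnn in jl'.
by rewrite !inE => /andP[/orP[]/eqP ej /orP[]/eqP el]; subst j' l' => //; lia.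
Qed.

Lemma woff_ortho th P (p q : 'I_n * 'I_n) : (p.1 < p.2)%N -> (q.1 < q.2)%N -> p != q ->
  woff th P p.1 p.2 * woff th P q.1 q.2 = 0.
Proof.
case: p q => [j l] [j' l'] /= jl jl' pq; apply/eqP; rewrite mulf_eq0.
apply: contraTT pq => /norP[off_neq0 off'_neq0]; apply/negPn/eqP.
by apply: upper_pair_eq => // k; rewrite -(woff_flips off_neq0) -(woff_flips off'_neq0).
Qed.

(* Each term of [wform_split] is nonzero only for Pauli strings with a prescribed
   set of flipped qubits, so the terms are pairwise orthogonal. *)
Lemma wform4 th P : wform th P ^+ 4 =
  wdiag P ^+ 4 + \sum_(p : 'I_n * 'I_n | (p.1 < p.2)%N) woff th P p.1 p.2 ^+ 4.
Proof.
rewrite wform_split exprD_ortho; last first.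
  rewrite big_distrr big1 // => [[j l]] /= jl.
  by rewrite wdiag_woff_ortho // -val_eqE /= ltn_eqF.
congr (_ + _); apply: expr_sum_ortho => p q p_up q_up; exact: woff_ortho.
Qed.

End WformDecomposition.

Section PauliSums.
Variable R : realType.
Variable n : nat.
Implicit Types (th : 'I_n -> R) (j l : 'I_n).

Lemma sum_pauli_prod (V : comPzSemiRingType) (F : 'I_n -> 'I_4 -> V) :
  \sum_(P : pauli n) \prod_k F k (P k) = \prod_k \sum_(p < 4) F k p.
Proof. by rewrite bigA_distr_bigA. Qed.

Lemma sum_Pentry_pow4 j l a : j != l -> (a < 5)%N ->
  \sum_(P : pauli n) Pentry R P j l ^+ (4 - a) * Pentry R P l j ^+ a
  = 2 ^+ n * (~~ odd a)%:R.
Proof.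
move=> jl a_lt5.
pose F k p := sigma R p (k == j) (k == l) ^+ (4 - a) * sigma R p (k == l) (k == j) ^+ a.
rewrite (eq_bigr (fun P : pauli n => \prod_k F k (P k))); last by
  move=> P _; rewrite /Pentry /Pmat -!prodrXl -big_split; apply: eq_bigr => k _; rewrite !ffunE.
rewrite sum_pauli_prod (eq_bigr (fun k => 2 * (~~ odd a || ((k == j) == (k == l)))%:R)).
  rewrite big_split /= prodr_const card_ord; congr (_ * _).
  case: (odd a) => /=; last by rewrite big1.
  by rewrite (bigD1 j) //= eqxx (negPf jl) mul0r.
move=> k _; rewrite sum_sigma_pow4 //.
by have [->|] := eqVneq k j; rewrite ?(negPf jl) ?andbF.
Qed.

Lemma sum_woff4 th j l : j != l ->
  \sum_(P : pauli n) woff th P j l ^+ 4 =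
  2 ^+ n * (phase th j l ^+ 4 + 6 * (phase th j l * phase th l j) ^+ 2 + phase th l j ^+ 4).
Proof.
move=> jl; set x := phase th j l; set y := phase th l j.
pose m P a := Pentry R P j l ^+ (4 - a)%N * Pentry R P l j ^+ a.
have expand P : woff th P j l ^+ 4 =
  x ^+ 4 * m P 0%N + 4 * x ^+ 3 * y * m P 1%N + 6 * (x * y) ^+ 2 * m P 2%N
  + 4 * x * y ^+ 3 * m P 3%N + y ^+ 4 * m P 4%N.
  by rewrite /woff -/x -/y /m; ring.
have sum_term c a : (a < 5)%N -> \sum_P c * m P a = c * (2 ^+ n * (~~ odd a)%:R).
  by move=> a5; rewrite -mulr_sumr sum_Pentry_pow4.
by rewrite (eq_bigr _ (fun P _ => expand P)) !big_split !sum_term //=; ring.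
Qed.

End PauliSums.

Section EvenlyPaired.
Variable n : nat.
Variable V : comNzRingType.
Local Notation delta x y := ((x == y)%:R : V).

Definition evenly_paired (a b c d : 'I_n) : bool :=
  [forall k, ~~ ((k == a) (+) (k == b) (+) (k == c) (+) (k == d))].

Lemma evenly_paired_indicator a b c d : (evenly_paired a b c d)%:R =
  delta a b * delta c d + delta a c * delta b d + delta a d * delta b c
  - 2 * delta a b * delta a c * delta a d.
Proof.
have paired2 x y : [forall k : 'I_n, ~~ ((k == x) (+) (k == y))] = (x == y).
  apply/forallP/eqP => [/(_ x)|-> k]; last by rewrite addbb.
  by rewrite eqxx; case: eqP.
have [<-|ab] := eqVneq a b.
  have -> : evenly_paired a a c d = (c == d).
    by rewrite -paired2; apply: eq_forallb => k; case: (k == a).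
  by rewrite /=; ring.
have [<-|ac] := eqVneq a c.
  have -> : evenly_paired a b a d = (b == d).
    by rewrite -paired2; apply: eq_forallb => k; case: (k == a); case: (k == b).
  by rewrite (eq_sym b a) (negPf ab) /=; ring.
have [<-|ad] := eqVneq a d.
  have -> : evenly_paired a b c a = (b == c).
    by rewrite -paired2; apply: eq_forallb => k; case: (k == a); case: (k == b); case: (k == c).
  by rewrite /=; ring.
have -> : evenly_paired a b c d = false.
  by apply/forallP => /(_ a); rewrite eqxx (negPf ab) (negPf ac) (negPf ad).
by rewrite /=; ring.
Qed.

Lemma sum_delta (x : 'I_n) : \sum_(y < n) delta x y = 1.
Proof. by rewrite (bigD1 x) //= eqxx big1 ?addr0 // => y /negPf; rewrite eq_sym => ->. Qed.

Lemma sum_evenly_paired :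
  \sum_a \sum_b \sum_c \sum_d ((evenly_paired a b c d)%:R : V) = n%:R * (3 * n%:R - 2).
Proof.
have sum_affine (x y z : 'I_n) (u v w t : V) :
    \sum_d (delta x d * u + delta y d * v + delta z d * w + t) = u + v + w + n%:R * t.
  by rewrite !big_split /= -!big_distrl /= !sum_delta !mul1r sumr_const card_ord mulr_natl.
have sum_d (a b c : 'I_n) : \sum_d ((evenly_paired a b c d)%:R : V) =
    delta a c * (1 - 2 * delta a b) + delta b c * 1 + delta a c * 0 + delta a b.
  rewrite (eq_bigr (fun d => delta c d * delta a b + delta b d * delta a c +
       delta a d * (delta b c - 2 * delta a b * delta a c) + 0)) => [|d _].
    by rewrite sum_affine; ring.
  by rewrite evenly_paired_indicator; ring.
have sum_cd (a b : 'I_n) : \sum_c \sum_d ((evenly_paired a b c d)%:R : V) =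
    delta a b * (n%:R - 2) + delta a b * 0 + delta a b * 0 + 2.
  by under eq_bigr do [rewrite sum_d]; rewrite sum_affine; ring.
have sum_bcd (a : 'I_n) : \sum_b \sum_c \sum_d ((evenly_paired a b c d)%:R : V) = 3 * n%:R - 2.
  by under eq_bigr do [rewrite sum_cd]; rewrite sum_affine; ring.
by under eq_bigr do [rewrite sum_bcd]; rewrite sumr_const card_ord [RHS]mulr_natl.
Qed.

End EvenlyPaired.

Section DiagonalSum.
Variable R : realType.
Variable n : nat.

Lemma sum_Pentry_diag4 (a b c d : 'I_n) :
  \sum_(P : pauli n) Pentry R P a a * Pentry R P b b * Pentry R P c c * Pentry R P d d
  = 2 ^+ n * (evenly_paired a b c d)%:R.
Proof.
pose F k p := sigma R p (k == a) (k == a) * sigma R p (k == b) (k == b) *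
              sigma R p (k == c) (k == c) * sigma R p (k == d) (k == d).
rewrite (eq_bigr (fun P : pauli n => \prod_k F k (P k))) => [|P _]; last first.
  by rewrite /Pentry /Pmat -!big_split; apply: eq_bigr => k _; rewrite !ffunE.
rewrite sum_pauli_prod (eq_bigr (fun k =>
    2 * (~~ ((k == a) (+) (k == b) (+) (k == c) (+) (k == d)))%:R)) => [|k _]; last first.
  exact: sum_sigma_diag4.
rewrite big_split /= prodr_const card_ord; congr (_ * _).
have [/forallP even|/forallPn[k odd_k]] := boolP (evenly_paired a b c d).
  by apply: big1 => k _; rewrite even.
by rewrite (bigD1 k) //= (negPf odd_k) mul0r.
Qed.

Lemma sum_wdiag4 : \sum_(P : pauli n) wdiag R P ^+ 4 = 2 ^+ n * (n%:R * (3 * n%:R - 2)).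
Proof.
rewrite -sum_evenly_paired mulr_sumr; under eq_bigr do rewrite /wdiag expr4_sum.
rewrite exchange_big; apply: eq_bigr => a _; rewrite exchange_big mulr_sumr.
apply: eq_bigr => b _; rewrite exchange_big mulr_sumr.
apply: eq_bigr => c _; rewrite exchange_big mulr_sumr.
by apply: eq_bigr => d _; rewrite sum_Pentry_diag4.
Qed.

End DiagonalSum.

Section Assembly.
Variable R : realType.
Variable n : nat.
Implicit Types (th : 'I_n -> R) (j l : 'I_n).

Lemma phaseXn th j l k : phase th j l ^+ k = phase (fun i => k%:R * th i) j l.
Proof. by rewrite /phase exprMn -rmorphXn /= -!expiMn. Qed.

Lemma phase_mul_swap th j l : phase th j l * phase th l j = 1.
Proof.
transitivity ((expi (th j))^* * expi (th j) * ((expi (th l))^* * expi (th l))).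
  by rewrite /phase; ring.
by rewrite !conj_expiM mulr1.
Qed.

Lemma sum_phase th : \sum_j \sum_l phase th j l = `|\sum_j expi (th j)| ^+ 2.
Proof.
rewrite normCKC rmorph_sum big_distrl /=; apply: eq_bigr => j _.
by rewrite big_distrr.
Qed.

Lemma sum_wform4 th : \sum_(P : pauli n) wform th P ^+ 4 =
  2 ^+ n * (6 * n%:R * (n%:R - 1) + `|\sum_j expi (4 * th j)| ^+ 2).
Proof.
pose G j l := 3 + phase th j l ^+ 4.
under eq_bigr do rewrite wform4.
rewrite big_split /= sum_wdiag4 exchange_big /=.
have sum_pair j l : (j < l)%N ->
    \sum_(P : pauli n) woff th P j l ^+ 4 = 2 ^+ n * (G j l + G l j).
  by move=> jl; rewrite sum_woff4 -?val_eqE /= ?ltn_eqF // phase_mul_swap expr1n /G; ring.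
rewrite (eq_bigr _ (fun p => sum_pair p.1 p.2)).
have sum_upper : \sum_(p : 'I_n * 'I_n | (p.1 < p.2)%N) (G p.1 p.2 + G p.2 p.1)
    = \sum_j \sum_l G j l - \sum_j G j j.
  by rewrite sum_diag_upper addrC addKr.
have diag : \sum_j G j j = 4 * n%:R.
  rewrite (eq_bigr (fun _ => 4)) => [|j _]; first by rewrite sumr_const card_ord mulr_natr.
  by rewrite /G phase_diag expr1n; ring.
have full : \sum_j \sum_l G j l = 3 * n%:R ^+ 2 + `|\sum_j expi (4 * th j)| ^+ 2.
  rewrite -sum_phase; under eq_bigr do rewrite big_split /= sumr_const card_ord.
  rewrite big_split /= sumr_const card_ord.
  under [X in _ + X]eq_bigr do under eq_bigr do rewrite phaseXn.
  by ring.
rewrite -mulr_sumr sum_upper diag full; ring.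
Qed.

Lemma norm44_Wstate th : norm44 (Wstate th) =
  2 ^+ n / n%:R ^+ 4 * (6 * n%:R * (n%:R - 1) + Normc.normc (\sum_j expi (4 * th j)) ^+ 2).
Proof.
have sum_Re4 : \sum_(P : pauli n) complex.Re (wform th P) ^+ 4 =
    2 ^+ n * (6 * n%:R * (n%:R - 1) + Normc.normc (\sum_j expi (4 * th j)) ^+ 2).
  apply: complexI; rewrite rmorph_sum /=.
  under eq_bigr do rewrite rmorphXn /= wform_real.
  rewrite sum_wform4 !(rmorphM, rmorphB, rmorphD, rmorphXn, rmorphN, rmorph_nat, rmorph1) /=.
  (* [`|z|] unfolds to [(Normc.normc z)%:C], so [ring] sees a single atom. *)
  by rewrite expr2; ring.
rewrite /norm44; under eq_bigr do rewrite Xi_Wstate exprMn.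
by rewrite -mulr_sumr sum_Re4 exprVn; ring.
Qed.

End Assembly.

Section Entropy.
Variable R : realType.
Variable n : nat.
Hypothesis n_gt0 : (0 < n)%N.
Implicit Types (th : 'I_n -> R).

Lemma W_denom_gt0 th :
  0 < 6 * n%:R * (n%:R - 1) + Normc.normc (\sum_j expi (4 * th j)) ^+ 2.
Proof.
case: n th n_gt0 => [//|[|m]] th _.
  by rewrite big_ord1 normc_expi subrr mulr0 add0r expr1n.
apply: ltr_wpDr; first exact: sqr_ge0.
by rewrite mulr_gt0 ?mulr_gt0 ?ltr0n // subr_gt0 ltr1n.
Qed.

Lemma M2_Wstate th : M2 (Wstate th) =
  log2 (n%:R ^+ 4 / (6 * n%:R * (n%:R - 1) + Normc.normc (\sum_j expi (4 * th j)) ^+ 2)).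
Proof.
have := W_denom_gt0 th; set X := _ + _ => X_gt0.
have n_neq0 : (n%:R : R) != 0 by rewrite pnatr_eq0 -lt0n.
have pow2_neq0 : (2 : R) ^+ n != 0 by rewrite expf_neq0 // pnatr_eq0.
rewrite /M2 norm44_Wstate -/X.
have -> : 2 ^+ n / n%:R ^+ 4 * X / 2 ^+ n = (n%:R ^+ 4 / X)^-1.
  by field; rewrite (gt_eqF X_gt0) n_neq0 pow2_neq0.
by rewrite /log2 lnV ?mulNr ?opprK // posrE divr_gt0 // exprn_gt0 // ltr0n.
Qed.

End Entropy.

Section ExponentialSums.
Variable R : realType.
Variable n : nat.

Lemma normc_sum_expi0 : Normc.normc (\sum_(j < n) expi (4 * 0 : R)) ^+ 2 = n%:R ^+ 2.
Proof.
apply: complexI; rewrite normc_sqr mulr0 expi0 sumr_const card_ord.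
by rewrite rmorph_nat rmorphXn rmorph_nat expr2.
Qed.

Lemma sqr_norm_expiB1 (b : R) :
  (expi (2 * b) - 1)^* * (expi (2 * b) - 1) = (4 * sin b ^+ 2)%:C.
Proof.
rewrite (_ : 2 * b = b + b); last by ring.
rewrite expiD /expi; apply/eqP; rewrite eq_complex /=; apply/andP; split; apply/eqP; last by ring.
apply: subr0_eq; transitivity ((cos b ^+ 2 + sin b ^+ 2 - 1) ^+ 2); first by ring.
by rewrite cos2Dsin2 subrr expr0n.
Qed.

Lemma normc_sum_expi_arith (t : R) :
  Normc.normc (\sum_(j < n) expi (4 * ((j.+1)%:R * t))) ^+ 2 = sinratio n t.
Proof.
set z := expi (2 * (2 * t)).
have z_pow k : expi (4 * (k%:R * t)) = z ^+ k by rewrite -expiMn; congr expi; ring.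
apply: complexI; rewrite normc_sqr.
under eq_bigr do rewrite z_pow exprS.
rewrite -mulr_sumr; set G := \sum_(j < n) z ^+ j.
have -> : (z * G)^* * (z * G) = G^* * G.
  by rewrite rmorphM -[RHS]mul1r -(conj_expiM (2 * (2 * t))) -/z; ring.
have geom : (z - 1) * G = z ^+ n - 1 by rewrite subrX1.
have zn : z ^+ n = expi (2 * (2 * n%:R * t)) by rewrite -z_pow; congr expi; ring.
have key : (4 * sin (2 * t) ^+ 2)%:C * (G^* * G) = (4 * sin (2 * n%:R * t) ^+ 2)%:C.
  by rewrite -sqr_norm_expiB1 -/z -sqr_norm_expiB1 -zn -geom rmorphM; ring.
rewrite /sinratio; case: ifPn => [/eqP sin0 | sin_neq0].
  have z1 : z = 1.
    apply/eqP; rewrite -subr_eq0 -mul_conjC_eq0 mulrC sqr_norm_expiB1 sin0.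
    by rewrite expr0n mulr0.
  rewrite /G z1 (eq_bigr (fun _ => 1)) => [|j _]; last by rewrite expr1n.
  by rewrite sumr_const card_ord rmorph_nat rmorphXn rmorph_nat expr2.
have four_sin_neq0 : ((4 * sin (2 * t) ^+ 2)%:C : R[i]) != 0.
  by rewrite (inj_eq (@complexI R)) mulf_neq0 ?expf_neq0 // pnatr_eq0.
have cancel : 4 * sin (2 * t) ^+ 2 * (sin (2 * n%:R * t) ^+ 2 / sin (2 * t) ^+ 2)
    = 4 * sin (2 * n%:R * t) ^+ 2 by field.
by apply: (mulfI four_sin_neq0); rewrite key -cancel rmorphM.
Qed.

End ExponentialSums.

Theorem mainTheorem13 (R : realType) (n : nat) (hn : (1 <= n)%N)
  (th : 'I_n -> R) (t : R) :
  let nR : R := n%:R in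
  let d : R := 2 ^+ n in
  let S : R := Normc.normc (\sum_(j < n) expi (4 * th j)) ^+ 2 in
  let tht : 'I_n -> R := fun j => (j.+1)%:R * t in
  (norm44 (Wstate th) = d / nR ^+ 4 * (6 * nR * (nR - 1) + S) /\
      M2 (Wstate th) = log2 (nR ^+ 4 / (6 * nR * (nR - 1) + S)) /\
      norm44 (Wstate (fun _ : 'I_n => 0 : R)) = d * (7 * nR - 6) / nR ^+ 3 /\
      M2 (Wstate (fun _ : 'I_n => 0 : R)) = log2 (nR ^+ 3 / (7 * nR - 6)) /\
      norm44 (Wstate tht) = d * (6 * nR ^+ 2 - 6 * nR + sinratio n t) / nR ^+ 4 /\
    M2 (Wstate tht) = log2 (nR ^+ 4 / (6 * nR ^+ 2 - 6 * nR + sinratio n t))).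
Proof.
move=> nR d S tht.
have nR_ge1 : 1 <= nR by rewrite ler1n.
have nR_neq0 : nR != 0 by rewrite pnatr_eq0 -lt0n.
have denW_neq0 : 7 * nR - 6 != 0 by apply: lt0r_neq0; lra.
have denW_neq0' : 6 * nR * (nR - 1) + nR ^+ 2 != 0 by apply: lt0r_neq0; nra.
split; first exact: norm44_Wstate.
split; first exact: M2_Wstate.
split; first by rewrite norm44_Wstate /= normc_sum_expi0 -/nR -/d; field.
split.
  by rewrite M2_Wstate //= normc_sum_expi0 -/nR; congr log2; field; rewrite denW_neq0 denW_neq0'.
split; first by rewrite norm44_Wstate /= normc_sum_expi_arith -/nR -/d; field.
by rewrite M2_Wstate //= normc_sum_expi_arith -/nR; congr log2; congr (_ / _); ring.
Qed.
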